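(* Let $d\ge 1$, $K\ge 2$. Let $\Sigma_X\in\mathbb{R}^{d\times d}$ be symmetric positive definite and $P\in\mathbb{R}^{K\times K}$ be symmetric positive definite. Let $\boldsymbol{x}\in\mathbb{R}^d$ with $\boldsymbol{x}\neq \boldsymbol{0}$, let $y\in\mathbb{R}$ and $\boldsymbol{\theta}\in\mathbb{R}^d$ with residual $r:=y-\boldsymbol{x}^\top\boldsymbol{\theta}\neq 0$. Let $\boldsymbol{\sigma}\in\mathbb{R}^K$ be a probability vector ($\sigma_k\ge 0$, $\sum_k\sigma_k=1$) and $\mathbf{e}_{c}\in\{0,1\}^K$ the one-hot vector of a class $c\in\{1,\dots,K\}$, with $\boldsymbol{\sigma}\neq\mathbf{e}_c$. Define $$\mathrm{IF}_{\mathrm{MSE}}=\Sigma_X^{-1}\boldsymbol{x}\,r\in\mathbb{R}^d,\qquad \mathrm{IF}_{\mathrm{CE}}=-(\Sigma_X\otimes P)^{-1}\big(\boldsymbol{x}\otimes(\boldsymbol{\sigma}-\mathbf{e}_c)\big)\in\mathbb{R}^{dK},$$ and $R=\|\mathrm{IF}_{\mathrm{CE}}\|_2/\|\mathrm{IF}_{\mathrm{MSE}}\|_2$. Then $$\frac{\|\boldsymbol{\sigma}-\mathbf{e}_c\|_2}{\kappa_2(\Sigma_X)\,\lambda_{\max}(P)\,|r|}\;\le\; R\;\le\;\frac{\sqrt{2}\,\kappa_2(\Sigma_X)}{\lambda_{\min}(P)\,|r|},$$ where $\kappa_2(\Sigma_X)=\|\Sigma_X\|_2\|\Sigma_X^{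-1}\|_2=\lambda_{\max}(\Sigma_X)/\lambda_{\min}(\Sigma_X)$.
   Context: $\otimes$ denotes the Kronecker product and $\|\cdot\|_2$ the Euclidean norm for vectors and the spectral norm for matrices; $\lambda_{\min},\lambda_{\max}$ denote smallest and largest eigenvalues. Interpretation in the paper: $\Sigma_X=\mathbb{E}[\boldsymbol{x}\boldsymbol{x}^\top]$ is the feature covariance (the Hessian of the squared loss $\tfrac12(y-\boldsymbol{x}^\top\boldsymbol{\theta})^2$ in a linear regression model), $\mathrm{IF}_{\mathrm{MSE}}$ is the influence function of the least-squares estimator at the sample $(\boldsymbol{x},y)$; for a $K$-class softmax linear classifier with parameters $\boldsymbol{\beta}\in\mathbb{R}^{d\times K}$, $\boldsymbol{\sigma}=\mathrm{softmax}(\boldsymbol{x}^\top\boldsymbol{\beta})$, $P$ plays the role of the (expected) softmax covariance matrix $\mathrm{diag}(\boldsymbol{\sigma})-\boldsymbol{\sigma}\boldsymbol{\sigma}^\top$, the cross-entropy Hessian is taken to be $\Sigma_X\otimes P$, and $\mathrm{IF}_{\mathrm{CE}}$ is the cross-entropy influence function at the sample with true label $c$. *)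

From HB Require Import structures.
From mathcomp Require Import all_boot all_order all_algebra.
From mathcomp Require Import mxtens.
From mathcomp Require Import boolp classical_sets reals.
Set Implicit Arguments. Unset Strict Implicit. Unset Printing Implicit Defensive.
Import Order.TTheory GRing.Theory Num.Theory.
Local Open Scope ring_scope.
Local Open Scope classical_set_scope.

Definition vnorm (R : realType) (n : nat) (v : 'cV[R]_n) : R :=
  Num.sqrt (\sum_(i < n) v i 0 ^+ 2).

Definition spd (R : realType) (n : nat) (A : 'M[R]_n) : Prop :=
  A^T = A /\ forall v : 'cV[R]_n, v != 0 -> 0 < (v^T *m A *m v) 0 0.

Definition lambda_max (R : realType) (n : nat) (A : 'M[R]_n) : R :=
  sup [set a : R | eigenvalue A a].
Definition lambda_min (R : realType) (n : nat) (A : 'M[R]_n) : R :=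
  inf [set a : R | eigenvalue A a].

Definition specnorm (R : realType) (n : nat) (A : 'M[R]_n) : R :=
  sup [set t : R | exists v : 'cV[R]_n, v != 0 /\ t = vnorm (A *m v) / vnorm v].

Definition kappa2 (R : realType) (n : nat) (A : 'M[R]_n) : R :=
  specnorm A * specnorm (invmx A).

(* Since (Sigma_X (x) P)^-1 (x (x) u) = Sigma_X^-1 x (x) P^-1 u with u = sigma - e_c, and the
   Euclidean norm is multiplicative on Kronecker products of vectors, the ratio is exactly
   R = |P^-1 u| / |r|.  Diagonalising the symmetric matrix P gives
   lambda_min(P) |P^-1 u| <= |u| <= lambda_max(P) |P^-1 u|; moreover
   |u|^2 <= sum_k sigma_k + 1 = 2 for a probability vector, and kappa_2(Sigma_X) >= 1.
   Real symmetric matrices are diagonalised through their complexification, which is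
   normal and hence unitarily diagonalisable with a real spectrum. *)

From HB Require Import structures.
From mathcomp Require Import all_boot all_order all_algebra.
From mathcomp Require Import mxtens.
From mathcomp Require Import boolp classical_sets reals.
From mathcomp Require complex.
From mathcomp Require Import lra.
Set Implicit Arguments. Unset Strict Implicit. Unset Printing Implicit Defensive.
Import Order.TTheory GRing.Theory Num.Theory.
Local Open Scope ring_scope.

Section Eigenvalues.
Variables (F : fieldType) (n : nat).

Lemma eigenvalue_conj_unitmx (U B : 'M[F]_n) a : U \in unitmx ->
  eigenvalue (invmx U *m B *m U) a = eigenvalue B a.
Proof.
move=> Uu; apply/eigenvalueP/eigenvalueP => [[v vBa v0] | [w wBa w0]].
- exists (v *m invmx U).
    by rewrite scalemxAl -vBa !mulmxA mulmxK.
  by apply: contraNneq v0 => h; rewrite -(mulmxKV Uu v) h mul0mx.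
- exists (w *m U); first by rewrite !mulmxA mulmxK // wBa scalemxAl.
  by apply: contraNneq w0 => h; rewrite -(mulmxK Uu w) h mul0mx.
Qed.

Lemma eigenvalue_diagP (D : 'rV[F]_n) a :
  reflect (exists i, a = D 0 i) (eigenvalue (diag_mx D) a).
Proof.
rewrite eigenvalue_root_char char_poly_trig ?diag_mx_is_trig //.
rewrite (eq_bigr (fun i => 'X - (D 0 i)%:P)) => [|i _]; last by rewrite mxE eqxx.
rewrite -(big_map (D 0) xpredT (fun b => 'X - b%:P)) root_prod_XsubC.
by apply: (iffP mapP) => [[i _ ->]|[i ->]]; exists i => //; rewrite mem_index_enum.
Qed.
End Eigenvalues.

Section Vnorm.
Variable R : realType.

Lemma vnorm_ge0 n (v : 'cV[R]_n) : 0 <= vnorm v.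
Proof. exact: sqrtr_ge0. Qed.

Lemma sqr_vnorm n (v : 'cV[R]_n) : vnorm v ^+ 2 = \sum_i v i 0 ^+ 2.
Proof. by rewrite sqr_sqrtr // sumr_ge0 // => i _; rewrite sqr_ge0. Qed.

Lemma vnorm_gt0 n (v : 'cV[R]_n) : v != 0 -> 0 < vnorm v.
Proof.
move=> v0; rewrite lt_def vnorm_ge0 andbT sqrtr_eq0 -ltNge.
have [i vi0] : exists i, v i 0 != 0.
  apply/existsP; apply: contraNT v0 => /existsPn vi0.
  by apply/eqP/matrixP => i j; rewrite (ord1 j) mxE; apply/eqP/negPn/vi0.
rewrite (bigD1 i) //= ltr_pwDl ?sumr_ge0 // => [|j _]; last exact: sqr_ge0.
by rewrite lt0r sqr_ge0 sqrf_eq0 vi0.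
Qed.

Lemma vnormN n (v : 'cV[R]_n) : vnorm (- v) = vnorm v.
Proof. by congr Num.sqrt; apply: eq_bigr => i _; rewrite mxE sqrrN. Qed.

Lemma vnormZ n a (v : 'cV[R]_n) : vnorm (a *: v) = `|a| * vnorm v.
Proof.
rewrite /vnorm -sqrtr_sqr -sqrtrM ?sqr_ge0 // mulr_sumr.
by congr Num.sqrt; apply: eq_bigr => i _; rewrite mxE exprMn.
Qed.

Lemma vnorm_tens m n (a : 'cV[R]_m) (b : 'cV[R]_n) :
  vnorm (a *t b : 'cV[R]_(m * n)) = vnorm a * vnorm b.
Proof.
rewrite /vnorm -sqrtrM ?sumr_ge0 // => [|i _]; last exact: sqr_ge0.
congr Num.sqrt; rewrite mulr_sum; apply: eq_bigr => k _; rewrite mxE exprMn.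
by rewrite !(ord1 (mxtens_unindex _).2) !(ord1 (mxtens_unindex _).1).
Qed.

End Vnorm.

Section RealSymmetricSpectral.
Import complex.
Variable R : realType.
Local Notation C := R[i].
Local Notation toC := (real_complex R).
Local Open Scope sesquilinear_scope.

Lemma dotmx_unitarymx n (u : 'rV[C]_n) (U : 'M[C]_n) :
  U \is unitarymx -> dotmx (u *m U) (u *m U) = dotmx u u.
Proof.
move=> /unitarymxP UU.
by rewrite !dotmxE trmx_mul map_mxM mulmxA -(mulmxA u) UU mulmx1.
Qed.

Lemma dotmx_sum n (u : 'rV[C]_n) : dotmx u u = \sum_j u 0 j * (u 0 j)^*.
Proof. by rewrite dotmxE mxE; apply: eq_bigr => j _; rewrite !mxE. Qed.

Lemma dotmx_map_real n (w : 'rV[R]_n) :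
  dotmx (map_mx toC w) (map_mx toC w) = toC (\sum_j w 0 j ^+ 2).
Proof.
rewrite dotmx_sum rmorph_sum; apply: eq_bigr => j _.
rewrite mxE conj_Creal ?rmorphXn ?expr2 //.
by apply/complex_realP; exists (w 0 j).
Qed.

Lemma mul_conjC_realE (z : C) : z * z^* = toC (Re (z * z^*)).
Proof. by rewrite RRe_real // ger0_real // mul_conjC_ge0. Qed.

(* [om i] is the squared modulus of the i-th coordinate of [w] in an orthonormal
   eigenbasis of [A]. *)
Theorem real_sym_spectral n (A : 'M[R]_n) : A^T = A ->
  exists d : 'I_n -> R,
    (forall a, eigenvalue A a <-> exists i, a = d i) /\
    forall w : 'cV[R]_n, exists2 om : 'I_n -> R, (forall i, 0 <= om i) &
      vnorm w ^+ 2 = \sum_i om i /\ vnorm (A *m w) ^+ 2 = \sum_i d i ^+ 2 * om i.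
Proof.
move=> symA; pose Ac := map_mx toC A.
have Ac_sym : Ac \is symmetricmx.
  by apply/is_hermitianmxP; rewrite expr0 scale1r map_mx_id // /Ac map_trmx symA.
have Ac_real : Ac \is a realmx.
  by apply/mxOverP => i j; rewrite mxE; apply/complex_realP; exists (A i j).
pose U := spectralmx Ac; pose D := spectral_diag Ac.
have /orthomx_spectralP AcE := symmetric_normalmx Ac_sym Ac_real.
have Uu : U \in unitmx := spectral_unit Ac.
have DE i : D 0 i = toC (Re (D 0 i)).
  have /mxOverP Dreal := hermitian_spectral_diag_real (realsym_hermsym Ac_sym Ac_real).
  by rewrite RRe_real // Dreal.
exists (fun i => Re (D 0 i)); split => [a | w].
  rewrite -(eigenvalue_map toC) -/Ac AcE eigenvalue_conj_unitmx //.
  split=> [/eigenvalue_diagP [i ai] | [i ->]]; last first.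
    by apply/eigenvalue_diagP; exists i; exact: esym (DE i).
  by exists i; apply: complexI; rewrite -DE.
pose z := map_mx toC w^T *m invmx U.
have wE : map_mx toC w^T = z *m U by rewrite mulmxKV.
have AwE : map_mx toC (A *m w)^T = z *m diag_mx D *m U.
  by rewrite trmx_mul symA map_mxM wE -/Ac {1}AcE !mulmxA mulmxK.
pose om i := Re (z 0 i * (z 0 i)^*).
exists om => [i|]; first by rewrite -ler0c -mul_conjC_realE mul_conjC_ge0.
have vnormE (v : 'cV[R]_n) :
    toC (vnorm v ^+ 2) = dotmx (map_mx toC v^T) (map_mx toC v^T).
  by rewrite dotmx_map_real sqr_vnorm; congr toC; apply: eq_bigr => j _; rewrite mxE.
split; apply: complexI; rewrite vnormE ?wE ?AwE dotmx_unitarymx ?spectral_unitarymx //;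
  rewrite dotmx_sum rmorph_sum; apply: eq_bigr => i _; first exact: mul_conjC_realE.
have Dreal : (D 0 i)^* = D 0 i.
  by rewrite conj_Creal // DE; apply/complex_realP; eexists.
rewrite mul_mx_diag mxE rmorphM /= Dreal mulrACA mulrC -expr2.
by rewrite [z 0 i * _]mul_conjC_realE DE -rmorphXn -rmorphM.
Qed.
End RealSymmetricSpectral.

Section SymmetricBounds.
Variables (R : realType) (n : nat) (A : 'M[R]_n).
Hypothesis symA : A^T = A.

Lemma sym_vnorm_mulmx_le M : 0 <= M -> (forall a, eigenvalue A a -> `|a| <= M) ->
  forall w, vnorm (A *m w) <= M * vnorm w.
Proof.
move=> M0 eigM w; have [d [eigA decomp]] := real_sym_spectral symA.
have [om om0 [wE AwE]] := decomp w.
rewrite -(ler_pXn2r (_ : 0 < 2)%N) ?nnegrE ?mulr_ge0 ?vnorm_ge0 //.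
rewrite exprMn AwE wE mulr_sumr; apply: ler_sum => i _.
have dM : `|d i| <= M by apply/eigM/eigA; exists i.
apply: (ler_wpM2r (om0 i)); rewrite -real_normK ?num_real //.
by have := normr_ge0 (d i); nra.
Qed.

Lemma sym_vnorm_mulmx_ge m : 0 <= m -> (forall a, eigenvalue A a -> m <= `|a|) ->
  forall w, m * vnorm w <= vnorm (A *m w).
Proof.
move=> m0 eigm w; have [d [eigA decomp]] := real_sym_spectral symA.
have [om om0 [wE AwE]] := decomp w.
rewrite -(ler_pXn2r (_ : 0 < 2)%N) ?nnegrE ?mulr_ge0 ?vnorm_ge0 //.
rewrite exprMn AwE wE mulr_sumr; apply: ler_sum => i _.
have mdi : m <= `|d i| by apply/eigm/eigA; exists i.
apply: (ler_wpM2r (om0 i)); rewrite -[d i ^+ 2]real_normK ?num_real //; nra.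
Qed.

Lemma sym_eigenvalue_bounded : exists2 M, 0 <= M & forall a, eigenvalue A a -> `|a| <= M.
Proof.
have [d [eigA _]] := real_sym_spectral symA.
exists (\big[Order.max/0]_i `|d i|) => [|a /eigA [i ->]]; first exact: bigmax_ge_id.
exact: le_bigmax.
Qed.

Lemma sym_eigenvalue_exists : (0 < n)%N -> exists a, eigenvalue A a.
Proof.
move=> n_gt0; have [d [eigA _]] := real_sym_spectral symA.
by exists (d (Ordinal n_gt0)); apply/eigA; eexists.
Qed.

Lemma eigenvalue_le_lambda_max a : eigenvalue A a -> a <= lambda_max A.
Proof.
move=> eigAa; have [M _ eigM] := sym_eigenvalue_bounded.
apply: (ub_le_sup _ eigAa); exists M => b /eigM.
exact/le_trans/ler_norm.
Qed.

Lemma lambda_min_le_eigenvalue a : eigenvalue A a -> lambda_min A <= a.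
Proof.
move=> eigAa; have [M _ eigM] := sym_eigenvalue_bounded.
apply: (ge_inf _ eigAa); exists (- M) => b /eigM.
by rewrite ler_norml => /andP[].
Qed.

Lemma specnorm_ge v : v != 0 -> vnorm (A *m v) / vnorm v <= specnorm A.
Proof.
move=> v0; have [M M0 eigM] := sym_eigenvalue_bounded.
apply: ub_le_sup; last by exists v.
exists M => _ [w [w0 ->]]; rewrite ler_pdivrMr ?vnorm_gt0 //.
exact: sym_vnorm_mulmx_le.
Qed.

End SymmetricBounds.

Lemma kappa2_ge1 (R : realType) n (A : 'M[R]_n) :
  A^T = A -> A \in unitmx -> (0 < n)%N -> 1 <= kappa2 A.
Proof.
move=> symA Au n_gt0; pose x : 'cV[R]_n := delta_mx (Ordinal n_gt0) 0.
have x0 : x != 0.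
  by apply/negP => /eqP/matrixP/(_ (Ordinal n_gt0) 0)/eqP; rewrite !mxE !eqxx oner_eq0.
pose w := invmx A *m x.
have w0 : w != 0.
  by apply: contraNneq x0 => wx; rewrite -(mulKVmx Au x) -/w wx mulmx0.
have symAV : (invmx A)^T = invmx A by rewrite trmx_inv symA.
have specA := specnorm_ge symA w0; rewrite mulKVmx // in specA.
have specAV := specnorm_ge symAV x0; rewrite -/w in specAV.
apply: le_trans (ler_pM _ _ specA specAV); rewrite ?divr_ge0 ?vnorm_ge0 //.
by rewrite mulrA divfK ?divff // gt_eqF // vnorm_gt0.
Qed.

Section PositiveDefinite.
Variables (R : realType) (n : nat) (A : 'M[R]_n).
Hypothesis spdA : spd A.
Let symA : A^T = A := spdA.1.

Lemma spd_unitmx : A \in unitmx.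
Proof.
have [_ posA] := spdA; rewrite unitmxE unitfE; apply/negP => /det0P [v v0 vA].
have := posA v^T; rewrite trmx_eq0 trmxK vA mul0mx mxE ltxx.
by move=> /(_ v0).
Qed.

Lemma spd_eigenvalue_gt0 a : eigenvalue A a -> 0 < a.
Proof.
have [_ posA] := spdA; move=> /eigenvalueP [v vA v0].
have := posA v^T; rewrite trmx_eq0 trmxK vA -scalemxAl mxE => /(_ v0).
have -> : (v *m v^T) 0 0 = vnorm v^T ^+ 2.
  by rewrite sqr_vnorm mxE; apply: eq_bigr => j _; rewrite !mxE expr2.
by rewrite pmulr_lgt0 // exprn_gt0 // vnorm_gt0 // trmx_eq0.
Qed.

Lemma spd_eigenvalue_lbound : exists2 m, 0 < m & forall a, eigenvalue A a -> m <= a.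
Proof.
have [d [eigA _]] := real_sym_spectral symA.
have eig_d i : eigenvalue A (d i) by apply/eigA; exists i.
exists (\big[Order.min/1]_i d i) => [|a /eigA [i ->]]; last exact: bigmin_le.
elim/big_ind: _ => // [x y x0 y0|i _]; first by rewrite lt_min x0 y0.
exact/spd_eigenvalue_gt0/eig_d.
Qed.

Lemma lambda_min_gt0 : (0 < n)%N -> 0 < lambda_min A.
Proof.
move=> n_gt0; have [m m0 lbm] := spd_eigenvalue_lbound.
have [a eigAa] := sym_eigenvalue_exists symA n_gt0.
by apply: lt_le_trans m0 (lb_le_inf _ lbm); exists a.
Qed.

Lemma lambda_max_gt0 : (0 < n)%N -> 0 < lambda_max A.
Proof.
move=> n_gt0; have [a eigAa] := sym_eigenvalue_exists symA n_gt0.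
exact: lt_le_trans (spd_eigenvalue_gt0 eigAa) (eigenvalue_le_lambda_max symA eigAa).
Qed.

Lemma spd_vnorm_mulmx_le w : (0 < n)%N -> vnorm (A *m w) <= lambda_max A * vnorm w.
Proof.
move=> n_gt0; apply: (sym_vnorm_mulmx_le symA) => [|a eigAa].
  exact/ltW/lambda_max_gt0.
rewrite gtr0_norm ?spd_eigenvalue_gt0 //.
exact: (eigenvalue_le_lambda_max symA eigAa).
Qed.

Lemma spd_vnorm_mulmx_ge w : (0 < n)%N -> lambda_min A * vnorm w <= vnorm (A *m w).
Proof.
move=> n_gt0; apply: (sym_vnorm_mulmx_ge symA) => [|a eigAa].
  exact/ltW/lambda_min_gt0.
rewrite gtr0_norm ?spd_eigenvalue_gt0 //.
exact: (lambda_min_le_eigenvalue symA eigAa).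
Qed.

End PositiveDefinite.

Section Kronecker.
Variable R : fieldType.

Lemma tensmx11 m n : (1%:M : 'M[R]_m) *t (1%:M : 'M[R]_n) = 1%:M.
Proof.
apply/matrixP => i j; case: (mxtens_indexP i) => i1 i2.
case: (mxtens_indexP j) => j1 j2; rewrite tensmxE !mxE -natrM mulnb.
by rewrite (inj_eq (can_inj (@mxtens_indexK _ _))) xpair_eqE.
Qed.

Lemma invmx_tens m n (A : 'M[R]_m) (B : 'M[R]_n) : A \in unitmx -> B \in unitmx ->
  invmx (A *t B) = invmx A *t invmx B.
Proof.
move=> Au Bu; have ABV : (invmx A *t invmx B) *m (A *t B) = 1%:M.
  by rewrite tensmx_mul !mulVmx // tensmx11.
have [_ ABu] := mulmx1_unit ABV.
by rewrite -[RHS]mulmx1 -(mulmxV ABu) mulmxA ABV mul1mx.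
Qed.

End Kronecker.

Lemma vnorm_prob_sub_delta (R : realType) K (sigma : 'cV[R]_K) (c : 'I_K) :
  (forall k, 0 <= sigma k 0) -> \sum_k sigma k 0 = 1 ->
  vnorm (sigma - delta_mx c 0) <= Num.sqrt 2.
Proof.
move=> sigma0 sigma1; have sigma_le1 k : sigma k 0 <= 1.
  by rewrite -sigma1 (bigD1 k) //= lerDl sumr_ge0.
rewrite -(ler_pXn2r (_ : 0 < 2)%N) ?nnegrE ?vnorm_ge0 ?sqrtr_ge0 //.
rewrite /= sqr_vnorm sqr_sqrtr //.
apply: (@le_trans _ _ (\sum_k (sigma k 0 + (k == c)%:R))).
  apply: ler_sum => k _; rewrite !mxE eqxx andbT.
  by have := sigma0 k; have := sigma_le1 k; case: (k == c) => /=; nra.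
rewrite big_split /= sigma1 (bigD1 c) //= eqxx big1 ?addr0 // => k /negPf -> //.
Qed.

Lemma vnorm_invmx_tens_ratio (R : realType) m n (S : 'M[R]_m) (P : 'M[R]_n)
    (x : 'cV[R]_m) (u : 'cV[R]_n) (r : R) :
  S \in unitmx -> P \in unitmx -> x != 0 ->
  vnorm (- (invmx (S *t P) *m (x *t u : 'cV[R]_(m * n)))) / vnorm (r *: (invmx S *m x))
  = vnorm (invmx P *m u) / `|r|.
Proof.
move=> Su Pu x0; have s_gt0 : 0 < vnorm (invmx S *m x).
  apply: vnorm_gt0; apply: contraNneq x0 => Sx0.
  by rewrite -(mulKVmx Su x) Sx0 mulmx0.
have tensE : invmx S *t invmx P *m (x *t u : 'cV[R]_(m * n)) =
    (invmx S *m x *t (invmx P *m u) : 'cV[R]_(m * n)) := tensmx_mul _ _ x u.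
rewrite vnormN invmx_tens // tensE vnorm_tens vnormZ.
by rewrite [_ * vnorm _]mulrC [`|r| * _]mulrC invfM mulrA mulfK ?gt_eqF.
Qed.

Theorem mainTheorem1 (R : realType) (d K : nat) (hd : (1 <= d)%N) (hK : (2 <= K)%N)
  (SigmaX : 'M[R]_d) (P : 'M[R]_K) (hS : spd SigmaX) (hP : spd P)
  (x : 'cV[R]_d) (hx : x != 0) (y : R) (theta : 'cV[R]_d)
  (hr : y - (x^T *m theta) 0 0 != 0)
  (sigma : 'cV[R]_K) (hsig0 : forall k : 'I_K, 0 <= sigma k 0)
  (hsig1 : \sum_(k < K) sigma k 0 = 1)
  (c : 'I_K) (hc : sigma != delta_mx c 0) :
  let r := y - (x^T *m theta) 0 0 in
  let IF_MSE : 'cV[R]_d := r *: (invmx SigmaX *m x) in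
  let IF_CE : 'cV[R]_(d * K) :=
    - (invmx (SigmaX *t P) *m (x *t (sigma - delta_mx c 0) : 'cV[R]_(d * K))) in
  let ratio := vnorm IF_CE / vnorm IF_MSE in
  vnorm (sigma - delta_mx c 0) / (kappa2 SigmaX * lambda_max P * `|r|) <= ratio
  /\ ratio <= Num.sqrt 2 * kappa2 SigmaX / (lambda_min P * `|r|).
Proof.
move=> r IF_MSE IF_CE ratio.
have K_gt0 : (0 < K)%N by apply: leq_trans hK.
set u := sigma - delta_mx c 0; pose q := invmx P *m u.
have -> : ratio = vnorm q / `|r|.
  exact: vnorm_invmx_tens_ratio (spd_unitmx hS) (spd_unitmx hP) hx.
have u_le := spd_vnorm_mulmx_le hP q K_gt0; have u_ge := spd_vnorm_mulmx_ge hP q K_gt0.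
rewrite mulKVmx ?spd_unitmx // in u_le u_ge.
have u_sqrt2 : vnorm u <= Num.sqrt 2 := vnorm_prob_sub_delta c hsig0 hsig1.
have kappa1 := kappa2_ge1 hS.1 (spd_unitmx hS) hd.
have lmin_gt0 := lambda_min_gt0 hP K_gt0; have lmax_gt0 := lambda_max_gt0 hP K_gt0.
have q_ge0 := vnorm_ge0 q; have sqrt2_ge0 := sqrtr_ge0 (2 : R).
have r_gt0 : 0 < `|r| by rewrite normr_gt0.
(* Generalizing kappa2 keeps the rewrites below from unfolding it. *)
move: (kappa2 SigmaX) kappa1 => k k1.
rewrite !invfM !mulrA; split; rewrite ler_pM2r ?invr_gt0 //.
- rewrite !ler_pdivrMr ?(lt_le_trans ltr01 k1) //.
  by have := mulr_ge0 (ltW lmax_gt0) q_ge0; nra.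
- by rewrite ler_pdivlMr //; nra.
Qed.
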